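(* Let $(X,d)$ be a compact metric space and $f_{0,\infty}=\{f_n\}_{n=0}^\infty$ an equi-continuous sequence of continuous self-maps of $X$. If $h(f_{0,\infty})>0$, then $h^{*}(f_{0,\infty})=+\infty$.
   Context: $f_{0,\infty}$ is equi-continuous if for every $\epsilon>0$ there is $\delta>0$ with $d(x,y)<\delta\Rightarrow d(f_n x,f_n y)<\epsilon$ for all $n\ge0$. $f_0^n=f_{n-1}\circ\cdots\circ f_0$, $f_0^0=\mathrm{id}$. $\mathcal S$ is the set of strictly increasing sequences $A=\{a_i\}_{i\ge1}$ of nonnegative integers and $h_A(f_{0,\infty})=\sup_{\mathscr A}\limsup_{n\to\infty}\frac1n\log\mathcal N(\bigvee_{i=1}^n (f_0^{a_i})^{-1}\mathscr A)$ over finite open covers $\mathscr A$, with $\bigvee$ the common refinement and $\mathcal N$ the minimal cardinality of a subcover. The topological entropy is $h(f_{0,\infty})=h_A(f_{0,\infty})$ for $A=\{0,1,2,\dots\}$, and the supremum topological sequence entropy is $h^*(f_{0,\infty})=\sup_{A\in\mathcal S}h_A(f_{0,\infty})$. *)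

From HB Require Import structures.
From mathcomp Require Import all_boot all_order all_algebra.
From mathcomp Require Import all_classical all_reals all_analysis.
Set Implicit Arguments. Unset Strict Implicit. Unset Printing Implicit Defensive.
Import Order.TTheory GRing.Theory Num.Theory.
Local Open Scope classical_set_scope.
Local Open Scope ring_scope.

Section NonAutonomousEntropy.
Context {R : realType} {X : metricType R}.

Definition equicontinuous_seq (f : nat -> X -> X) : Prop :=
  forall eps : R, 0 < eps -> exists2 delta : R, 0 < delta &
    forall x y : X, mdist x y < delta -> forall n, mdist (f n x) (f n y) < eps.

Fixpoint fiter (f : nat -> X -> X) (n : nat) : X -> X :=
  match n with
  | 0 => id
  | m.+1 => f m \o fiter f m
  end.

Definition open_cover (U : seq (set X)) : Prop :=
  (forall i, (i < size U)%N -> open (nth set0 U i)) /\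
  (forall x : X, exists2 i, (i < size U)%N & nth set0 U i x).

Definition Ncov (F : set (set X)) : \bar R :=
  ereal_inf [set ((size s)%:R)%:E | s in
    [set s : seq (set X) | (forall i, (i < size s)%N -> F (nth set0 s i)) /\
       (forall x : X, exists2 i, (i < size s)%N & nth set0 s i x)]].

(** the common refinement \/_{i=1}^n (f_0^{a_i})^{-1} U, where the
    increasing sequence a_1 < a_2 < ... is encoded as a 0-indexed
    a : nat -> nat (a i = a_{i+1}) *)
Definition join_cover (f : nat -> X -> X) (a : nat -> nat) (U : seq (set X))
    (n : nat) : set (set X) :=
  [set B | exists j : nat -> nat, (forall i, (i < n)%N -> (j i < size U)%N) /\
     B = \bigcap_(i in [set i | (i < n)%N]) (fiter f (a i) @^-1` nth set0 U (j i))].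

Definition strictly_increasing (a : nat -> nat) : Prop :=
  forall i j, (i < j)%N -> (a i < a j)%N.

Definition seq_entropy (f : nat -> X -> X) (a : nat -> nat) : \bar R :=
  ereal_sup [set limn_esup (fun n : nat =>
      ((ln (fine (Ncov (join_cover f a U n)))) / n%:R)%:E) | U in open_cover].

Definition top_entropy (f : nat -> X -> X) : \bar R := seq_entropy f id.

Definition sup_seq_entropy (f : nat -> X -> X) : \bar R :=
  ereal_sup [set seq_entropy f a | a in strictly_increasing].

End NonAutonomousEntropy.

(* Pick an open cover U and c > 0 such that, for infinitely many n, the join
   of U along the times 0, 1, ..., n-1 needs more than exp (c n) members.
   Given k, a Lebesgue number of U together with equicontinuity of the
   compositions f_s^r (r < k), uniform in s, yields a finite open cover V by
   sets that every such composition maps into a member of U.  The join of V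
   along the times 0, k, ..., k(n-1) then refines the join of U along
   0, 1, ..., kn-1, so the sequence entropy along the multiples of k is at
   least c k / 2.  As k is arbitrary, h^* is infinite. *)

From HB Require Import structures.
From mathcomp Require Import all_boot all_order all_algebra.
From mathcomp Require Import all_classical all_reals all_analysis.
From mathcomp Require Import zify lra.
Import Order.TTheory GRing.Theory Num.Theory.
Local Open Scope classical_set_scope.
Local Open Scope ring_scope.
Set Implicit Arguments. Unset Strict Implicit.

Definition subcover (T : Type) (F : set (set T)) (s : seq (set T)) : Prop :=
  (forall i, (i < size s)%N -> F (nth set0 s i)) /\
  (forall x : T, exists2 i, (i < size s)%N & nth set0 s i x).

Section Subcover.
Context {T : Type}.
Implicit Types (F G : set (set T)) (s t : seq (set T)).

Lemma subcover_sub F G s : F `<=` G -> subcover F s -> subcover G s.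
Proof. by move=> FG [sF scov]; split=> // i /sF /FG. Qed.

Lemma subcover_map (I : eqType) (g : I -> set T) (r : seq I) F :
  (forall i, F (g i)) -> (forall x, exists2 i, i \in r & g i x) ->
  subcover F (map g r).
Proof.
move=> Fg rcov; split=> [i|x]; last first.
  have [i ir gix] := rcov x; exists (index i r); first by rewrite size_map index_mem.
  by rewrite (nth_map i) ?index_mem ?nth_index.
by case: r rcov => [|i0 r] _ ir //; rewrite (nth_map i0) -?(size_map g).
Qed.

Lemma subcover_preimage (T' : Type) (g : T' -> T) F s :
  subcover F s -> subcover [set g @^-1` A | A in F] (map (preimage g) s).
Proof.
move=> [sF scov]; split=> [i|x]; rewrite size_map.
  by move=> si; rewrite (nth_map set0) //; exists (nth set0 s i); first exact: sF.
by have [i si gx] := scov (g x); exists i; rewrite ?(nth_map set0).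
Qed.

Lemma subcover_meet F G s t : subcover F s -> subcover G t ->
  exists u, subcover [set A `&` B | A in F & B in G] u.
Proof.
move=> [sF scov] [tG tcov]; set p := size t.
exists (mkseq (fun q => nth set0 s (q %/ p) `&` nth set0 t (q %% p)) (size s * p)).
split=> [q|x].
  rewrite size_mkseq => qsp; rewrite nth_mkseq //.
  have p0 : (0 < p)%N by move: qsp; case: p; rewrite ?muln0.
  exists (nth set0 s (q %/ p)); first by apply: sF; rewrite ltn_divLR.
  by exists (nth set0 t (q %% p)) => //; apply: tG; rewrite ltn_pmod.
have [i si sx] := scov x; have [l lp tx] := tcov x.
have ilp : (i * p + l < size s * p)%N by nia.
exists (i * p + l)%N; first by rewrite size_mkseq.
have p0 : (0 < p)%N := leq_ltn_trans (leq0n l) lp.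
by rewrite nth_mkseq // divnMDl // divn_small // addn0 modnMDl modn_small.
Qed.

End Subcover.

Section CompactBalls.
Context {R : realType} {T : pseudoMetricType R}.
Hypothesis cT : compact [set: T].

Lemma compact_interior_ball_cover (d : R) : 0 < d ->
  exists s : seq T, forall y, exists2 x, x \in s & (ball x d)° y.
Proof.
move=> d0.
pose F := filter_from [set: seq T] (fun s => [set t : seq T | {subset s <= t}]).
have FF : Filter F.
  apply: filter_from_filter; first by exists [::].
  move=> s1 s2 _ _; exists (s1 ++ s2) => // t st; split => x xs; apply: st;
    by rewrite mem_cat xs ?orbT.
have [x _|s _ hs] := (compact_near_coveringP _).1 cT _ F
    (fun t y => exists2 x, x \in t & (ball x d)° y) FF; last first.
  by exists s => y; apply: (hs s).
exists ((ball x d)°, [set t : seq T | x \in t]); first split.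
- exact/open_nbhs_nbhs/(open_nbhs_ball x (PosNum d0)).
- by exists [:: x] => // t; apply; rewrite mem_head.
by case=> y t [/= yb xt]; exists x.
Qed.

Lemma lebesgue_number (U : seq (set T)) : subcover open U ->
  exists2 e, 0 < e &
    forall y, exists2 l, (l < size U)%N & ball y e `<=` nth set0 U l.
Proof.
move=> [Uop Ucov].
have small : \forall e \near 0^'+, [set: T] `<=`
    [set y | exists2 l, (l < size U)%N & ball y e `<=` nth set0 U l].
  have := (compact_near_coveringP _).1 cT _ (0^'+)
    (fun e y => exists2 l, (l < size U)%N & ball y e `<=` nth set0 U l).
  apply=> x _.
  have [l lU Ulx] := Ucov x.
  have /nbhs_ballP[r /= r0 rU] : nbhs x (nth set0 U l).
    exact: open_nbhs_nbhs (conj (Uop l lU) Ulx).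
  exists (ball x (r / 2), [set e | e <= r / 2]); first split.
  - by apply: nbhsx_ballx; rewrite divr_gt0.
  - by apply: nbhs_right_le; rewrite divr_gt0.
  case=> y e [/= xy er]; exists l => // z yz; apply: rU.
  by apply: (ball_split xy); apply: le_ball yz.
have [e [e0 he]] := filter_ex (filterI (nbhs_right_gt 0) small).
by exists e => // y; apply: he.
Qed.

End CompactBalls.

Section LimnEsup.
Context {R : realType}.
Implicit Types u : nat -> \bar R.

Lemma lt_limn_esup_often u x : (x < limn_esup u)%E ->
  forall N, exists2 n, (N <= n)%N & (x < u n)%E.
Proof.
move=> xu N; have : (x < esups u N)%E.
  apply: (lt_le_trans xu); rewrite limn_esup_lim; apply: lime_le.
    exact: is_cvg_esups.
  by exists N => // m /= Nm; exact: nonincreasing_esups.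
by move=> /ereal_sup_gt [_ [n /= Nn <-] xun]; exists n.
Qed.

Lemma often_le_limn_esup u x :
  (forall N, exists2 n, (N <= n)%N & (x <= u n)%E) -> (x <= limn_esup u)%E.
Proof.
move=> often; rewrite limn_esup_lim; apply: lime_ge; first exact: is_cvg_esups.
apply: nearW => N; have [n Nn xun] := often N; apply: (le_trans xun).
by apply: ereal_sup_ubound; exists n.
Qed.

(* The factor [1/2] absorbs the rounding of [m] up to the multiple
   [k * (m %/ k).+1] of [k]. *)
Lemma limn_esup_dilate (u v : nat -> R) (k : nat) (c : R) :
  (0 < k)%N -> 0 <= c -> (forall m, 0 < u m -> u m <= v (m %/ k).+1) ->
  (c%:E < limn_esup (fun m => (u m / m%:R)%:E))%E ->
  ((c * k%:R / 2)%:E <= limn_esup (fun n => (v n / n%:R)%:E))%E.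
Proof.
move=> k0 c0 uv cu; apply: often_le_limn_esup => N.
have [m Nm] := lt_limn_esup_often cu (k * N.+1); rewrite lte_fin => cum.
set q := (m %/ k)%N.
have Nq : (N.+1 <= q)%N by rewrite leq_divRL // mulnC.
exists q.+1; first by lia.
rewrite lee_fin.
have m0 : (0 < m)%N by apply: leq_trans Nm; rewrite muln_gt0 k0.
have kqm : (k * q)%:R <= m%:R :> R by rewrite ler_nat mulnC leq_divM.
have q1 : 1 <= q%:R :> R by rewrite ler1n; apply: leq_trans Nq.
have k0R : 0 < k%:R :> R by rewrite ltr0n.
move: cum; rewrite ltr_pdivlMr ?ltr0n // => cum.
have um : u m <= v q.+1 by apply: uv; apply: le_lt_trans cum; rewrite mulr_ge0.
rewrite ler_pdivlMr ?ltr0n // -[q.+1%:R]natr1; rewrite natrM in kqm.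
have : 0 <= c * k%:R * (q%:R - 1) by rewrite !mulr_ge0 ?subr_ge0 // ltW.
have : c * (k%:R * q%:R) <= c * m%:R by rewrite ler_wpM2l.
nra.
Qed.

End LimnEsup.

Section NonAutonomous.
Context {R : realType} {X : metricType R}.
Implicit Types (f : nat -> X -> X) (F G : set (set X)) (U V : seq (set X)).

Lemma Ncov_ge0 F : (0 <= Ncov F)%E.
Proof. by apply: le_ereal_inf_tmp => _ [s _ <-]; rewrite lee_fin ler0n. Qed.

Lemma Ncov_fin_num F s : subcover F s -> Ncov F \is a fin_num.
Proof.
move=> Fs; rewrite ge0_fin_numE ?Ncov_ge0 //.
by apply: le_lt_trans (ltry (size s)%:R); apply: ereal_inf_lbound; exists s.
Qed.

Lemma Ncov_refine F G :
  (forall B, G B -> exists2 A, F A & B `<=` A) -> (Ncov F <= Ncov G)%E.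
Proof.
move=> GF; apply: le_ereal_inf_tmp => _ [s [sG scov] <-].
have /choice[g gP] : forall B, exists A, G B -> F A /\ B `<=` A.
  move=> B; have [/GF[A FA BA]|nGB] := pselect (G B); first by exists A.
  by exists B.
apply: ereal_inf_lbound; exists (map g s); last by rewrite size_map.
split=> [i|x]; rewrite size_map.
  by move=> si; rewrite (nth_map set0) //; exact: (gP _ (sG i si)).1.
have [i si sx] := scov x; exists i; rewrite ?(nth_map set0) //.
exact: (gP _ (sG i si)).2.
Qed.

Lemma fine_Ncov_le F G : (Ncov F <= Ncov G)%E -> Ncov G \is a fin_num ->
  fine (Ncov F) <= fine (Ncov G).
Proof.
move=> FG Gfin; apply: fine_le => //; rewrite ge0_fin_numE ?Ncov_ge0 //.
by apply: le_lt_trans FG _; rewrite ltey_eq Gfin.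
Qed.

Lemma fiterD f s r x :
  fiter f (s + r) x = fiter (fun m => f (s + m)) r (fiter f s x).
Proof. by elim: r => [|r IH] /=; rewrite ?addn0 // addnS /= IH. Qed.

Lemma equicontinuous_fiter f : equicontinuous_seq f ->
  forall k e, 0 < e -> exists2 d, 0 < d & forall s r x y, (r <= k)%N ->
    ball x d y ->
    ball (fiter (fun m => f (s + m)) r x) e (fiter (fun m => f (s + m)) r y).
Proof.
move=> equi; elim=> [|k IH] e e0.
  by exists e => // s r x y; rewrite leqn0 => /eqP ->.
have [d1 d10 hd1] := equi e e0.
have [|d2 d20 hd2] := IH (Order.min d1 e); first by rewrite lt_min d10 e0.
exists d2 => // s r x y; rewrite leq_eqVlt => /orP[/eqP-> | rk] xy.
  have := hd2 s k x y (leqnn k) xy; rewrite /= !ballEmdist /= lt_min.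
  by case/andP=> /hd1.
by apply: le_ball (hd2 s r x y rk xy); rewrite ge_min lexx orbT.
Qed.

Lemma le_Ncov_join_cover f a U m n : (m <= n)%N ->
  (Ncov (join_cover f a U m) <= Ncov (join_cover f a U n))%E.
Proof.
move=> mn; apply: Ncov_refine => _ [j [jU ->]].
exists (\bigcap_(i in [set i | (i < m)%N]) (fiter f (a i) @^-1` nth set0 U (j i))).
  by exists j; split=> // i im; apply: jU; exact: leq_trans im mn.
by move=> x /= Bx i im; apply: Bx; exact: leq_trans im mn.
Qed.

Lemma Ncov_join_cover_fin_num f a U n :
  (forall x, exists2 i, (i < size U)%N & nth set0 U i x) ->
  Ncov (join_cover f a U n) \is a fin_num.
Proof.
move=> Ucov; suff [s /Ncov_fin_num //] : exists s, subcover (join_cover f a U n) s.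
elim: n => [|n [s sJ]].
  exists [:: setT]; split=> [[|//] _|x]; last by exists 0%N.
  by exists (fun=> 0%N); split=> //; apply/seteqP; split=> x.
have Uself : subcover [set nth set0 U l | l in [set l | (l < size U)%N]] U.
  by split=> // i iU; exists i.
have [t tJ] := subcover_meet sJ (subcover_preimage (fiter f (a n)) Uself).
exists t; apply: subcover_sub tJ => _ [_ [j [jU ->]] [_ [_ [l lU <-] <-] <-]].
exists (fun i => if (i < n)%N then j i else l); split.
  by move=> i _; case: ifP => // /jU.
apply/seteqP; split=> x /=.
  move=> [Ax Ux] i /=; rewrite ltnS leq_eqVlt => /orP[/eqP-> | ilt].
    by rewrite ltnn.
  by rewrite ilt; apply: Ax.
move=> Jx; split=> [i ilt|]; first by have := Jx i (leqW ilt); rewrite /= ilt.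
by have := Jx n (ltnSn n); rewrite /= ltnn.
Qed.

Lemma le_Ncov_join_cover_dilate f U V (k n : nat) : (0 < k)%N ->
  (forall i s r, (i < size V)%N -> (r < k)%N -> exists2 l, (l < size U)%N &
    nth set0 V i `<=` fiter (fun m => f (s + m)) r @^-1` nth set0 U l) ->
  (Ncov (join_cover f id U (k * n)) <=
   Ncov (join_cover f (fun i => k * i)%N V n))%E.
Proof.
move=> k0 Vsmall; apply: Ncov_refine => _ [j [jV ->]].
have /choice[L LP] : forall q, exists l, (q < k * n)%N -> (l < size U)%N /\
    nth set0 V (j (q %/ k)%N) `<=`
    fiter (fun m => f (k * (q %/ k) + m)%N) (q %% k)%N @^-1` nth set0 U l.
  move=> q; have [qkn|] := ltnP q (k * n); last by exists 0%N.
  have [|l lU Vl] := Vsmall (j (q %/ k)%N) (k * (q %/ k))%N _ _ (ltn_pmod q k0).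
    by apply: jV; rewrite ltn_divLR // mulnC.
  by exists l.
exists (\bigcap_(q in [set q | (q < k * n)%N]) (fiter f q @^-1` nth set0 U (L q))).
  by exists L; split=> // q /LP[].
move=> x Bx q /= qkn; have [_ VU] := LP q qkn.
have -> : fiter f q x = fiter (fun m => f (k * (q %/ k) + m)%N) (q %% k)%N
    (fiter f (k * (q %/ k))%N x) by rewrite -fiterD mulnC -divn_eq.
by apply: VU; apply: Bx; rewrite /= ltn_divLR // mulnC.
Qed.

Definition cover_entropy f (a : nat -> nat) U : \bar R :=
  limn_esup (fun n => ((ln (fine (Ncov (join_cover f a U n)))) / n%:R)%:E).

Section EquicontinuousCompact.
Variable f : nat -> X -> X.
Hypotheses (cX : compact [set: X]) (equi : equicontinuous_seq f).

Lemma exists_refining_dilated_cover U (k : nat) : (0 < k)%N -> open_cover U ->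
  exists2 V, open_cover V & forall n,
    (Ncov (join_cover f id U (k * n)) <=
     Ncov (join_cover f (fun i => k * i)%N V n))%E.
Proof.
move=> k0 Uc; have [e e0 Ue] := lebesgue_number cX Uc.
have [d d0 de] := equicontinuous_fiter equi k e0.
have [s sd] := compact_interior_ball_cover cX d0.
have Vs : subcover [set B | open B /\ exists x, B `<=` ball x d]
    (map (fun x => (ball x d)°) s).
  apply: subcover_map => [x|//]; split; first exact: open_interior.
  by exists x; apply: interior_subset.
exists (map (fun x => (ball x d)°) s); first by apply: subcover_sub Vs => B [].
move=> n; apply: le_Ncov_join_cover_dilate => // i s' r iV rk.
have [_ [x Bx]] := Vs.1 i iV.
have [l lU el] := Ue (fiter (fun m => f (s' + m)) r x).
by exists l => // y /Bx xy; apply: el; apply: de => //; apply: ltnW.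
Qed.

Lemma cover_entropy_dilate U (k : nat) (c : R) : open_cover U ->
  (0 < k)%N -> 0 <= c -> (c%:E < cover_entropy f id U)%E ->
  exists2 V, open_cover V &
    ((c * k%:R / 2)%:E <= cover_entropy f (fun i => k * i)%N V)%E.
Proof.
move=> Uc k0 c0 cU; have [V Vc UV] := exists_refining_dilated_cover k0 Uc.
exists V => //; apply: (limn_esup_dilate k0 c0 _ cU) => m lnU0.
have NU1 : 1 < fine (Ncov (join_cover f id U m)).
  by rewrite ltNge; apply: contraTN lnU0 => /ln_le0; rewrite leNgt.
have : fine (Ncov (join_cover f id U m)) <=
       fine (Ncov (join_cover f (fun i => k * i)%N V (m %/ k).+1)).
  apply: fine_Ncov_le; last exact: Ncov_join_cover_fin_num Vc.2.
  apply: le_trans (UV _); apply: le_Ncov_join_cover.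
  by rewrite mulnC ltnW // ltn_ceil.
by move=> NUV; rewrite ler_ln // posrE; lra.
Qed.

End EquicontinuousCompact.

End NonAutonomous.

Theorem proposition4p3 (R : realType) (X : metricType R)
  (f : nat -> X -> X) :
  compact [set: X] ->
  (forall n, continuous (f n)) ->
  equicontinuous_seq f ->
  (0 < top_entropy f)%E ->
  sup_seq_entropy f = +oo%E.
Proof.
(* continuity of each [f n] already follows from equicontinuity *)
move=> cX _ equi /ereal_sup_gt[_ [U Uc <-] hU].
have [c c0 cU] : exists2 c : R, 0 < c & (c%:E < cover_entropy f id U)%E.
  have : (0 < cover_entropy f id U)%E := hU.
  case: (cover_entropy f id U) => [r r0| _|//]; last by exists 1; rewrite ?ltry.
  by exists (r / 2); move: r0; rewrite !lte_fin; lra.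
apply/eqyP => A A0; pose k := (Num.truncn (2 * A / c)).+1.
have [V Vc hV] := cover_entropy_dilate cX equi Uc (ltn0Sn _ : (0 < k)%N) (ltW c0) cU.
have Ak : A <= c * k%:R / 2.
  have := truncnS_gt (2 * A / c); rewrite ltr_pdivrMr // /k; lra.
apply: le_trans (ereal_sup_ubound _); last first.
  by exists (fun i => k * i)%N => // i j ij; rewrite ltn_pmul2l.
apply: le_trans (ereal_sup_ubound _); last by exists V.
by apply: le_trans hV; rewrite lee_fin.
Qed.
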